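(* Suppose that $m,n\in\mathbb N$ and that $R\in\{1,\ldots,2m-1\}$ is odd. Let $(X,\|\cdot\|_X)$ be a Banach space and $p\in[1,\infty)$. Then for every $f:\mathbb Z_{4m}^n\to X$ and every $S\subset\{1,\ldots,n\}$, $$\sum_{x\in\mathbb Z_{4m}^n}\|f(x)-D_Sf(x)\|_X^p\lesssim_p\frac{R^p}{2^n}\sum_{\varepsilon\in\{-1,1\}^n}\sum_{x\in\mathbb Z_{4m}^n}\|f(x+\varepsilon)-f(x)\|_X^p+\frac1{2^n}\sum_{\varepsilon\in\{-1,1\}^n}\sum_{x\in\mathbb Z_{4m}^n}\|f(x+\varepsilon_S)-f(x)\|_X^p.$$
   Context: $\mathbb Z_{4m}^n=(\mathbb Z/4m\mathbb Z)^n$, integer vectors added modulo $4m$. $\varepsilon_S=\sum_{j\in S}\varepsilon_je_j$. For $S\subset\{1,\ldots,n\}$ and odd $R\le 2m-1$, let $U_S\subset\mathbb Z_{4m}^n$ be the image (under reduction mod $4m$, which is injective on $[-R,R]^n$) of the set of integer vectors $y\in[-R,R]^n\cap\mathbb Z^n$ such that $y_i$ is even for every $i\in S$ and $y_j$ is odd for every $j\notin S$ (so $|U_S|=R^{|S|}(R+1)^{n-|S|}$). The averaging operator $D_S$ is $D_Sf(x)=\frac1{|U_S|}\sum_{y\in U_S}f(x+y)$. Notation: $a\lesssim_p b$ means $a\le c^pb$ for a universal constant $c$. *)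

From HB Require Import structures.
From mathcomp Require Import all_boot all_order all_algebra.
From Stdlib Require Import Reals.

Set Implicit Arguments.
Unset Strict Implicit.
Unset Printing Implicit Defensive.

Record Banach := {
  bcar :> Type;
  vadd : bcar -> bcar -> bcar;
  vopp : bcar -> bcar;
  vzero : bcar;
  vscal : R -> bcar -> bcar;
  vnorm : bcar -> R;
  vaddA : forall x y z, vadd x (vadd y z) = vadd (vadd x y) z;
  vaddC : forall x y, vadd x y = vadd y x;
  vadd0 : forall x, vadd x vzero = x;
  vaddN : forall x, vadd x (vopp x) = vzero;
  vscal1 : forall x, vscal 1%R x = x;
  vscalA : forall a b x, vscal a (vscal b x) = vscal (a * b)%R x;
  vscalDr : forall a x y, vscal a (vadd x y) = vadd (vscal a x) (vscal a y);
  vscalDl : forall a b x, vscal (a + b)%R x = vadd (vscal a x) (vscal b x);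
  vnorm_eq0 : forall x, vnorm x = 0%R -> x = vzero;
  vnorm_scal : forall a x, vnorm (vscal a x) = (Rabs a * vnorm x)%R;
  vnorm_tri : forall x y, (vnorm (vadd x y) <= vnorm x + vnorm y)%R;
  vcomplete : forall u : nat -> bcar,
    (forall eps, (0 < eps)%R -> exists N, forall i j, (N <= i)%coq_nat -> (N <= j)%coq_nat ->
        (vnorm (vadd (u i) (vopp (u j))) < eps)%R) ->
    exists l, forall eps, (0 < eps)%R -> exists N, forall i, (N <= i)%coq_nat ->
        (vnorm (vadd (u i) (vopp l)) < eps)%R
}.

Definition vsub (X : Banach) (x y : X) : X := vadd x (vopp y).

(* t^p for t >= 0 and real p >= 1 (with 0^p = 0; Stdlib's Rpower 0 p = 1). *)
Definition powp (t p : R) : R := if Rle_dec t 0 then 0%R else Rpower t p.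

Notation "\rsum_ ( x : T ) F" := (\big[Rplus/0%R]_(x : T) F)
  (at level 41, F at level 41, x, T at level 50).

Local Open Scope ring_scope.
Definition vec (m n : nat) := {ffun 'I_n -> 'Z_(4 * m)}.

Definition vplus m n (x y : vec m n) : vec m n := [ffun i => x i + y i].

Definition sgnvec m n (e : {ffun 'I_n -> bool}) : vec m n :=
  [ffun i => if e i then 1 else -1].

Definition sgnvecS m n (S : {set 'I_n}) (e : {ffun 'I_n -> bool}) : vec m n :=
  [ffun i => if i \in S then (if e i then 1 else -1) else 0].

Definition intvec n r (k : {ffun 'I_n -> 'I_(r.*2.+1)}) (i : 'I_n) : int :=
  (k i)%:Z - r%:Z.

(* U_S : image mod 4m of integer vectors y in [-r,r]^n with y_i even for i in S
   and y_j odd for j not in S *)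
Definition U_S m n r (S : {set 'I_n}) : {set vec m n} :=
  [set [ffun i => ((intvec k i)%:~R : 'Z_(4 * m))] |
     k : {ffun 'I_n -> 'I_(r.*2.+1)} &
     [forall i, (intvec k i \in dvdz 2) == (i \in S)]].

Local Close Scope ring_scope.
Definition D_S m n r (S : {set 'I_n}) (X : Banach) (f : vec m n -> X) (x : vec m n) : X :=
  vscal (/ INR #|U_S m r S|)%R
    (\big[@vadd X/vzero X]_(y in U_S m r S) f (vplus x y)).

From HB Require Import structures.
From mathcomp Require Import all_boot all_order all_algebra zify.
From Stdlib Require Import Reals Lra.

(* By Jensen's inequality, [sum_x ||f x - D_S f x||^p] is at most the average over
   [y] in [U_S] of the energy [E y = sum_x ||f (x + y) - f x||^p].  The coordinate
   sign flips permute [U_S], and each [y] in [U_S] is a sum of [r] vectors of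
   [{-1,1}^n] plus one vector [eps_S]; a sign flip maps these to vectors of the
   same kind.  Averaging over the [2^n] flips, the bounds
   [E (a + b) <= 2^(p-1) (E a + E b)] and
   [E (z_1 + ... + z_r) <= r^(p-1) (E z_1 + ... + E z_r)] (triangle inequality
   along the partial sums, then the power mean inequality) give the theorem with
   [c = 2]. *)

Set Implicit Arguments.
Unset Strict Implicit.
Unset Printing Implicit Defensive.
Import GRing.Theory.

(* The Stdlib imports take over the keys [%N] and [%R]: restore the former and
   give [ring_scope] the key [%ring]. *)
Delimit Scope nat_scope with N.
Delimit Scope ring_scope with ring.

Lemma RplusA : associative Rplus.
Proof. by move=> x y z; rewrite Rplus_assoc. Qed.
HB.instance Definition _ := Monoid.isComLaw.Build R 0%R Rplus RplusA Rplus_comm Rplus_0_l.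

HB.instance Definition _ (m n : nat) := GRing.Zmodule.on (vec m n).
HB.instance Definition _ (m n : nat) := Finite.on (vec m n).

Open Scope R_scope.

Section RealSums.
Variables (I : Type) (s : seq I) (P : pred I).

Lemma Rsum_le (F G : I -> R) : (forall i, P i -> F i <= G i) ->
  \big[Rplus/0]_(i <- s | P i) F i <= \big[Rplus/0]_(i <- s | P i) G i.
Proof. by move=> FG; apply: (big_ind2 Rle) => // *; lra. Qed.

Lemma Rsum_ge0 (F : I -> R) : (forall i, P i -> 0 <= F i) ->
  0 <= \big[Rplus/0]_(i <- s | P i) F i.
Proof. by move=> F0; apply: (big_ind (Rle 0)) => // *; lra. Qed.

Lemma Rsum_distrr c (F : I -> R) :
  c * \big[Rplus/0]_(i <- s | P i) F i = \big[Rplus/0]_(i <- s | P i) (c * F i).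
Proof. by apply: (big_endo (Rmult c)) => [x y|]; rewrite ?Rmult_plus_distr_l ?Rmult_0_r. Qed.

End RealSums.

Lemma Rsum_const (I : finType) (A : {pred I}) c :
  \big[Rplus/0]_(i in A) c = INR #|A| * c.
Proof.
rewrite big_const; elim: #|A| => [|k IH]; first by rewrite /= Rmult_0_l.
rewrite iterS IH S_INR; lra.
Qed.

Lemma Rpower1n q : Rpower 1 q = 1.
Proof. by rewrite /Rpower ln_1 Rmult_0_r exp_0. Qed.

(* Mean value theorem: [u^p - 1 = p c^(p-1) (u - 1)] with [c] between [u] and [1]. *)
Lemma Rpower_bernoulli u p : 1 <= p -> 0 < u -> 1 + p * (u - 1) <= Rpower u p.
Proof.
move=> hp hu.
have der c : 0 < c -> derivable_pt_lim (Rpower^~ p) c (p * Rpower c (p - 1)).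
  exact: derivable_pt_lim_power.
have [ult|[->|ugt]] := Rtotal_order u 1.
- have [c [/= mvt hc]] := MVT_cor2 _ _ u 1 ult (fun c hc => der c ltac:(lra)).
  have := Rle_Rpower_l c 1 (p - 1) ltac:(lra) ltac:(lra); rewrite Rpower1n.
  have : 0 <= p * (1 - u) by nra.
  rewrite Rpower1n in mvt; nra.
- rewrite Rpower1n; lra.
- have [c [/= mvt hc]] := MVT_cor2 _ _ 1 u ugt (fun c hc => der c ltac:(lra)).
  have := Rle_Rpower c 0 (p - 1) ltac:(lra) ltac:(lra); rewrite Rpower_O; last lra.
  have : 0 <= p * (u - 1) by nra.
  rewrite Rpower1n in mvt; nra.
Qed.

Lemma powp_ge0 t p : 0 <= powp t p.
Proof. rewrite /powp; case: (Rle_dec t 0) => ? /=; [lra | left; exact: exp_pos]. Qed.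

Lemma powp0 p : powp 0 p = 0.
Proof. by rewrite /powp; case: Rle_dec => //= ?; lra. Qed.

Lemma powp_Rpower t p : 0 < t -> powp t p = Rpower t p.
Proof. by rewrite /powp; case: Rle_dec => // ?; lra. Qed.

Lemma powp_le a b p : 0 <= p -> 0 <= a <= b -> powp a p <= powp b p.
Proof.
move=> hp [a0 ab]; have [->|a_neq0] := Req_dec a 0; first by rewrite powp0; apply: powp_ge0.
by rewrite !powp_Rpower; try lra; apply: Rle_Rpower_l; lra.
Qed.

Lemma powp_mul a b p : 0 <= a -> 0 <= b -> powp (a * b) p = powp a p * powp b p.
Proof.
move=> a0 b0.
have [->|a_neq0] := Req_dec a 0; first by rewrite Rmult_0_l powp0 Rmult_0_l.
have [->|b_neq0] := Req_dec b 0; first by rewrite Rmult_0_r powp0 Rmult_0_r.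
rewrite !powp_Rpower ?Rpower_mult_distr //; try lra; nra.
Qed.

Lemma powp_bernoulli u p : 1 <= p -> 0 <= u -> 1 + p * (u - 1) <= powp u p.
Proof.
move=> hp u0; have [->|u_neq0] := Req_dec u 0; first by rewrite powp0; lra.
by rewrite powp_Rpower; [apply: Rpower_bernoulli|]; lra.
Qed.

Section Jensen.
Variables (I : finType) (P : pred I) (p : R).
Hypothesis p_ge1 : 1 <= p.

(* Sum the Bernoulli inequality, i.e. the tangent line of t^p at the mean. *)
Lemma powp_jensen (w t : I -> R) :
  (forall i, P i -> 0 <= w i) -> (forall i, P i -> 0 <= t i) ->
  \big[Rplus/0]_(i | P i) w i = 1 ->
  powp (\big[Rplus/0]_(i | P i) (w i * t i)) p <=
  \big[Rplus/0]_(i | P i) (w i * powp (t i) p).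
Proof.
move=> w0 t0 w1; set s := \big[Rplus/0]_(i | P i) _.
have s0 : 0 <= s by apply: Rsum_ge0 => i Pi; apply: Rmult_le_pos; auto.
have [->|s_neq0] := Req_dec s 0.
  by rewrite powp0; apply: Rsum_ge0 => i Pi; apply: Rmult_le_pos; auto; apply: powp_ge0.
have tangent i : P i ->
    w i * (powp s p * (1 + p * (t i / s - 1))) <= w i * powp (t i) p.
  move=> Pi; apply: Rmult_le_compat_l; first by auto.
  have ts0 : 0 <= t i / s by apply: Rmult_le_pos; [auto | apply/Rlt_le/Rinv_0_lt_compat; lra].
  have -> : powp (t i) p = powp s p * powp (t i / s) p.
    by rewrite -powp_mul //; congr powp; field.
  by apply: Rmult_le_compat_l; [apply: powp_ge0 | apply: powp_bernoulli].
apply: Rle_trans _ (Rsum_le (index_enum I) tangent).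
have -> : \big[Rplus/0]_(i | P i) (w i * (powp s p * (1 + p * (t i / s - 1)))) =
    \big[Rplus/0]_(i | P i) (powp s p * (1 - p) * w i + powp s p * p / s * (w i * t i)).
  by apply: eq_bigr => i _; field.
rewrite big_split -!Rsum_distrr w1 -/s.
have -> : powp s p * p / s * s = powp s p * p by field.
rewrite /=; lra.
Qed.

Lemma powp_avg_le (t : I -> R) : (0 < #|P|)%N -> (forall i, P i -> 0 <= t i) ->
  powp (/ INR #|P| * \big[Rplus/0]_(i | P i) t i) p <=
  / INR #|P| * \big[Rplus/0]_(i | P i) powp (t i) p.
Proof.
move=> P_gt0 t0; have N0 : 0 < INR #|P| by apply/lt_0_INR/ltP.
rewrite !Rsum_distrr; apply: powp_jensen => //.
- by move=> i _; apply/Rlt_le/Rinv_0_lt_compat.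
- by rewrite (Rsum_const P); field; lra.
Qed.

Lemma powp_sum_le (t : I -> R) : (forall i, P i -> 0 <= t i) ->
  powp (\big[Rplus/0]_(i | P i) t i) p <=
  Rpower (INR #|P|) (p - 1) * \big[Rplus/0]_(i | P i) powp (t i) p.
Proof.
move=> t0; have [P0|P_gt0] := posnP #|P|.
  rewrite big_pred0 ?powp0; last by move=> i; have := card0_eq P0 i; rewrite inE.
  by apply: Rmult_le_pos; [exact/Rlt_le/exp_pos | apply: Rsum_ge0 => *; apply: powp_ge0].
have N0 : 0 < INR #|P| by apply/lt_0_INR/ltP.
have -> : Rpower (INR #|P|) (p - 1) = Rpower (INR #|P|) p * / INR #|P|.
  by rewrite Rpower_plus Rpower_Ropp Rpower_1.
have -> : \big[Rplus/0]_(i | P i) t i =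
    INR #|P| * (/ INR #|P| * \big[Rplus/0]_(i | P i) t i) by field; lra.
rewrite powp_mul; [|lra|]; last first.
  by apply: Rmult_le_pos; [apply/Rlt_le/Rinv_0_lt_compat | apply: Rsum_ge0].
rewrite powp_Rpower // Rmult_assoc; apply: Rmult_le_compat_l; first exact/Rlt_le/exp_pos.
exact: powp_avg_le.
Qed.

End Jensen.

Section Banach.
Variable X : Banach.
Implicit Types u v w : X.
Local Notation "u +v v" := (vadd u v) (at level 50, left associativity).
Local Notation "\vsum_ ( i 'in' A ) F" := (\big[@vadd X/vzero X]_(i in A) F)
  (at level 41, F at level 41, i, A at level 50).

Lemma vadd0l v : vzero X +v v = v.
Proof. by rewrite vaddC vadd0. Qed.

Lemma vaddIr w u v : u +v w = v +v w -> u = v.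
Proof. by move/(f_equal (fun z => z +v vopp w)); rewrite -!vaddA vaddN !vadd0. Qed.

Lemma vscal0 v : vscal 0 v = vzero X.
Proof. by apply: (@vaddIr (vscal 0 v)); rewrite vadd0l -vscalDl Rplus_0_l. Qed.

Lemma voppE v : vopp v = vscal (-1) v.
Proof.
apply: (@vaddIr v); rewrite vaddC vaddN -{2}(vscal1 v) -vscalDl.
by rewrite Rplus_opp_l vscal0.
Qed.

Lemma vnorm0 : vnorm (vzero X) = 0.
Proof. by rewrite -(vscal0 (vzero X)) vnorm_scal Rabs_R0 Rmult_0_l. Qed.

Lemma vnorm_opp v : vnorm (vopp v) = vnorm v.
Proof. by rewrite voppE vnorm_scal Rabs_Ropp Rabs_R1 Rmult_1_l. Qed.

Lemma vnorm_ge0 v : 0 <= vnorm v.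
Proof. have := vnorm_tri v (vopp v); rewrite vaddN vnorm0 vnorm_opp; lra. Qed.

Lemma vsubDD u v u' v' : vsub (u +v v) (u' +v v') = vsub u u' +v vsub v v'.
Proof.
rewrite /vsub !voppE vscalDr -!voppE -!vaddA; congr vadd.
by rewrite !vaddA (vaddC v).
Qed.

Lemma vscalB c u v : vscal c (vsub u v) = vsub (vscal c u) (vscal c v).
Proof. by rewrite /vsub vscalDr !voppE !vscalA Rmult_comm. Qed.

Lemma vdistC u v : vnorm (vsub u v) = vnorm (vsub v u).
Proof.
rewrite -vnorm_opp /vsub !voppE vscalDr vscalA.
by rewrite Rmult_opp_opp Rmult_1_r vscal1 vaddC.
Qed.

Lemma vdist_triangle u v w : vnorm (vsub u w) <= vnorm (vsub u v) + vnorm (vsub v w).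
Proof.
have -> : vsub u w = vsub u v +v vsub v w.
  by rewrite /vsub -vaddA (vaddA (vopp v)) (vaddC (vopp v)) vaddN vadd0l.
exact: vnorm_tri.
Qed.

Lemma vdist_telescope (g : nat -> X) N :
  vnorm (vsub (g N) (g 0%N)) <= \big[Rplus/0]_(j < N) vnorm (vsub (g j.+1) (g j)).
Proof.
elim: N => [|N IH]; first by rewrite big_ord0 /vsub vaddN vnorm0; apply: Rle_refl.
rewrite big_ord_recr /=; apply: Rle_trans (vdist_triangle _ (g N) _) _.
rewrite [X in _ <= X]Rplus_comm; exact: Rplus_le_compat_l.
Qed.

Lemma vsum_const (I : finType) (A : {pred I}) v : \vsum_(i in A) v = vscal (INR #|A|) v.
Proof.
rewrite big_const; elim: #|A| => [|k IH]; first by rewrite /= vscal0.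
by rewrite iterS IH S_INR vscalDl vscal1 vaddC.
Qed.

Lemma vdist_vsum_le (I : finType) (A : {pred I}) (F G : I -> X) :
  vnorm (vsub (\vsum_(i in A) F i) (\vsum_(i in A) G i)) <=
  \big[Rplus/0]_(i in A) vnorm (vsub (F i) (G i)).
Proof.
apply: (big_ind3 (fun u v c => vnorm (vsub u v) <= c)) => [|u1 v1 c1 u2 v2 c2 h1 h2|i _].
- by rewrite /vsub vaddN vnorm0; apply: Rle_refl.
- by rewrite vsubDD; apply: Rle_trans (vnorm_tri _ _) _; lra.
- exact: Rle_refl.
Qed.

Lemma vdist_avg_le (I : finType) (A : {pred I}) (g : I -> X) v : (0 < #|A|)%N ->
  vnorm (vsub v (vscal (/ INR #|A|) (\vsum_(i in A) g i))) <=
  / INR #|A| * \big[Rplus/0]_(i in A) vnorm (vsub (g i) v).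
Proof.
move=> A_gt0; have N0 : 0 < INR #|A| by apply/lt_0_INR/ltP.
have {1}-> : v = vscal (/ INR #|A|) (\vsum_(i in A) v).
  by rewrite vsum_const vscalA Rinv_l ?vscal1 //; lra.
rewrite -vscalB vnorm_scal Rabs_right; last by apply/Rle_ge/Rlt_le/Rinv_0_lt_compat.
apply: Rmult_le_compat_l; first exact/Rlt_le/Rinv_0_lt_compat.
apply: Rle_trans (vdist_vsum_le _ _ _) _.
by rewrite (eq_bigr _ (fun i _ => vdistC v (g i))); apply: Rle_refl.
Qed.

End Banach.

Section Energy.
Variables (G : finZmodType) (X : Banach) (f : G -> X) (p : R).
Hypothesis p_ge1 : 1 <= p.

Definition energy (z : G) : R :=
  \rsum_(x : G) powp (vnorm (vsub (f (x + z)%ring) (f x))) p.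

Lemma energy_ge0 z : 0 <= energy z.
Proof. by apply: Rsum_ge0 => x _; apply: powp_ge0. Qed.

Lemma Rsum_addr (F : G -> R) z : \rsum_(x : G) F (x + z)%ring = \rsum_(x : G) F x.
Proof. by rewrite [RHS](reindex_inj (addIr z)). Qed.

(* Telescope along the partial sums and apply the power-mean inequality. *)
Lemma energy_sum_le N (z : nat -> G) :
  energy (\sum_(j < N) z j)%ring <=
  Rpower (INR N) (p - 1) * \big[Rplus/0]_(j < N) energy (z j).
Proof.
pose part j := (\sum_(i < j) z i)%ring.
pose step x j := vnorm (vsub (f (x + part j.+1)%ring) (f (x + part j)%ring)).
have pointwise x : powp (vnorm (vsub (f (x + part N)%ring) (f x))) p <=
    Rpower (INR N) (p - 1) * \big[Rplus/0]_(j < N) powp (step x j) p.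
  have := powp_sum_le (P := xpredT) (t := fun j : 'I_N => step x j) p_ge1
    (fun j _ => vnorm_ge0 _).
  rewrite card_ord; apply: Rle_trans; apply: powp_le; first lra.
  split; first exact: vnorm_ge0.
  have := vdist_telescope (fun j => f (x + part j)%ring) N.
  by rewrite /part big_ord0 addr0.
apply: Rle_trans (Rsum_le (index_enum G) (fun x _ => pointwise x)) _.
rewrite -Rsum_distrr exchange_big /=; apply: Rmult_le_compat_l.
  by left; apply: exp_pos.
apply: Rsum_le => j _; rewrite /energy -(Rsum_addr _ (part j)).
by apply: Req_le; apply: eq_bigr => x _; rewrite /step /part big_ord_recr /= addrA.
Qed.

Lemma energy_add_le a b :
  energy (a + b)%ring <= Rpower 2 (p - 1) * (energy a + energy b).
Proof.
have := energy_sum_le 2 (fun j => if j is 0 then a else b).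
by rewrite !big_ord_recr !big_ord0 /= add0r Rplus_0_l.
Qed.

End Energy.

Lemma INR_card_signs n : INR #|{ffun 'I_n -> bool}| = pow 2 n.
Proof.
rewrite card_ffun card_bool card_ord.
by elim: n => // n IH; rewrite expnS mult_INR IH.
Qed.

Section SignFlips.
Variables (V : zmodType) (n : nat).
Implicit Types (s e : {ffun 'I_n -> bool}) (y : {ffun 'I_n -> V}).

Definition flip s y : {ffun 'I_n -> V} := [ffun i => if s i then y i else (- y i)%ring].

Definition agree s e : {ffun 'I_n -> bool} := [ffun i => s i == e i].

Lemma flipK s : involutive (flip s).
Proof. by move=> y; apply/ffunP => i; rewrite !ffunE; case: (s i); rewrite ?opprK. Qed.

Lemma flipD s y y' : flip s (y + y')%ring = (flip s y + flip s y')%ring.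
Proof. by apply/ffunP => i; rewrite !ffunE; case: (s i); rewrite ?opprD. Qed.

Lemma flip_sum s I (r : seq I) (P : pred I) (F : I -> {ffun 'I_n -> V}) :
  flip s (\sum_(j <- r | P j) F j)%ring = (\sum_(j <- r | P j) flip s (F j))%ring.
Proof.
apply: (big_morph (flip s) (flipD s)).
by apply/ffunP => i; rewrite !ffunE; case: (s i); rewrite ?oppr0.
Qed.

Lemma agreeK e : involutive (agree^~ e).
Proof. by move=> s; apply/ffunP => i; rewrite !ffunE; case: (s i); case: (e i). Qed.

Lemma Rsum_agree (F : {ffun 'I_n -> bool} -> R) e :
  \rsum_(s : {ffun 'I_n -> bool}) F (agree s e) = \rsum_(s : {ffun 'I_n -> bool}) F s.
Proof. by rewrite [RHS](reindex_inj (can_inj (agreeK e))). Qed.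

End SignFlips.

Lemma flip_sgnvec m n s (e : {ffun 'I_n -> bool}) :
  flip s (sgnvec m e) = sgnvec m (agree s e).
Proof. by apply/ffunP => i; rewrite !ffunE; case: (s i); case: (e i); rewrite ?opprK. Qed.

Lemma flip_sgnvecS m n (S : {set 'I_n}) s e :
  flip s (sgnvecS m S e) = sgnvecS m S (agree s e).
Proof.
apply/ffunP => i; rewrite !ffunE.
by case: (i \in S); case: (s i); case: (e i); rewrite ?opprK ?oppr0.
Qed.

Lemma sum_sign_prefix (T : pzRingType) N a : (a <= N)%N ->
  (\sum_(j < N) (if (j < a)%N then 1 else -1) : T)%ring = (a%:R - (N - a)%:R)%ring.
Proof.
elim: N => [|N IH] aN.
  by rewrite (_ : a = 0%N) ?big_ord0 ?subrr //; lia.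
rewrite big_ord_recr /=; case: (ltnP N a) => [Na|aN'].
  have -> : a = N.+1 by lia.
  rewrite subnn subr0 mulrSr; congr (_ + _)%ring.
  rewrite (eq_bigr (fun=> 1%ring)) ?sumr_const ?card_ord // => j _.
  by rewrite ltnS (ltnW (ltn_ord j)).
by rewrite IH // subSn // mulrS opprD addrA addrAC.
Qed.

Section ParityBox.
Variables (m n r : nat) (S : {set 'I_n}).
Hypothesis r_odd : odd r.
Local Notation U := (U_S m r S).
Implicit Types (k : {ffun 'I_n -> 'I_r.*2.+1}) (y : vec m n).

Lemma intvec_dvd2 k i : (intvec k i \in dvdz 2) = odd (k i).
Proof.
rewrite /intvec -eqz_mod_dvd !modz_nat !modn2 r_odd.
by case: (odd (k i)).
Qed.

Lemma mem_U_S k : [forall i, odd (k i) == (i \in S)] ->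
  [ffun i => ((intvec k i)%:~R : 'Z_(4 * m))%ring] \in U.
Proof.
by move=> /forallP kS; apply/imsetP; exists k => //; rewrite inE;
   apply/forallP => i; rewrite intvec_dvd2.
Qed.

Lemma card_U_S_gt0 : (0 < #|U|)%N.
Proof.
apply/card_gt0P.
pose k : {ffun 'I_n -> 'I_r.*2.+1} := [ffun i => inord (if i \in S then r else r.+1)].
exists [ffun i => ((intvec k i)%:~R : 'Z_(4 * m))%ring]; apply: mem_U_S.
apply/forallP => i; rewrite /k ffunE inordK; last by case: (i \in S); lia.
by case: (i \in S); rewrite /= ?r_odd ?negbK.
Qed.

Lemma U_SP y : y \in U ->
  exists2 k : {ffun 'I_n -> 'I_r.*2.+1}, forall i, odd (k i) = (i \in S) &
  y = [ffun i => ((intvec k i)%:~R : 'Z_(4 * m))%ring].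
Proof.
case/imsetP => k; rewrite inE => /forallP kS ->; exists k => // i.
by apply/eqP; rewrite -intvec_dvd2; apply: kS.
Qed.

(* Reflecting a coordinate, [k i |-> 2r - k i], negates [intvec] and keeps parity. *)
Lemma flip_U_S s y : y \in U -> flip s y \in U.
Proof.
case/U_SP => k kS ->.
pose k' : {ffun 'I_n -> 'I_r.*2.+1} := [ffun i => if s i then k i else rev_ord (k i)].
have k'E i : intvec k' i = (if s i then intvec k i else - intvec k i)%ring.
  rewrite /intvec ffunE; case: (s i) => //=.
  by have := ltn_ord (k i); rewrite ltnS /=; lia.
have -> : flip s [ffun i => ((intvec k i)%:~R : 'Z_(4 * m))%ring] =
    [ffun i => ((intvec k' i)%:~R : 'Z_(4 * m))%ring].
  by apply/ffunP => i; rewrite !ffunE k'E; case: (s i); rewrite ?mulrNz.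
apply: mem_U_S; apply/forallP => i; rewrite ffunE -kS.
case: (s i) => //=; rewrite subSS oddB ?odd_double ?addFb //.
by rewrite -ltnS.
Qed.

Lemma Rsum_U_S_flip s (F : vec m n -> R) :
  \big[Rplus/0]_(y in U) F (flip s y) = \big[Rplus/0]_(y in U) F y.
Proof.
rewrite -(big_imset (h := flip s) F) => [|y y' _ _]; last exact: (can_inj (flipK s)).
apply: eq_bigl => y; apply/imsetP/idP => [[y' y'U ->]|yU]; first exact: flip_U_S.
by exists (flip s y); [apply: flip_U_S | rewrite flipK].
Qed.

(* Write [k i - r = h - (r - h) + odd (k i)] with [h = (k i)./2]: a sum of [r]
   signs, [h] of them positive, plus the [S]-part [odd (k i) = (i \in S)]. *)
Lemma U_S_decomp y : y \in U -> exists eps : nat -> {ffun 'I_n -> bool},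
  y = (\sum_(j < r) sgnvec m (eps j) + sgnvecS m S [ffun=> true])%ring.
Proof.
case/U_SP => k kS ->; exists (fun j => [ffun i => (j < (k i)./2)%N]).
apply/ffunP => i; rewrite !ffunE sum_ffunE.
under eq_bigr do rewrite !ffunE.
have half_le : ((k i)./2 <= r)%N.
  by have := half_leq (ltnSE (ltn_ord (k i))); rewrite doubleK.
have -> : intvec k i =
    ((k i)./2%:Z - (r - (k i)./2)%:Z + (odd (k i))%:Z)%ring.
  by rewrite /intvec; move: (odd_double_half (k i)) half_le; case: odd => /=; lia.
rewrite sum_sign_prefix // -kS intrD intrB.
by case: odd.
Qed.

End ParityBox.

Lemma vplusE m n (x y : vec m n) : vplus x y = (x + y)%ring.
Proof. by apply/ffunP => i; rewrite !ffunE. Qed.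

Section Smoothing.
Variables (m n r : nat) (S : {set 'I_n}) (X : Banach) (f : vec m n -> X) (p : R).
Hypotheses (r_odd : odd r) (p_ge1 : 1 <= p).
Local Notation U := (U_S m r S).
Local Notation E := (energy f p).

Lemma D_S_dist_le :
  \rsum_(x : vec m n) powp (vnorm (vsub (f x) (D_S r S f x))) p <=
  / INR #|U| * \big[Rplus/0]_(y in U) E y.
Proof.
have U_gt0 := card_U_S_gt0 m S r_odd.
have pointwise x : powp (vnorm (vsub (f x) (D_S r S f x))) p <=
    / INR #|U| * \big[Rplus/0]_(y in U) powp (vnorm (vsub (f (x + y)%ring) (f x))) p.
  apply: Rle_trans (powp_avg_le (P := mem U) p_ge1 U_gt0 (fun y _ => vnorm_ge0 _)).
  apply: powp_le; first lra; split; first exact: vnorm_ge0.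
  rewrite /D_S; under eq_bigr do rewrite vplusE.
  exact: vdist_avg_le.
apply: Rle_trans (Rsum_le (index_enum _) (fun x _ => pointwise x)) _.
by rewrite -Rsum_distrr exchange_big; apply: Req_le.
Qed.

Local Notation A := (\rsum_(e : {ffun 'I_n -> bool}) E (sgnvec m e)).
Local Notation B := (\rsum_(e : {ffun 'I_n -> bool}) E (sgnvecS m S e)).

Lemma energy_flip_sum_le y : y \in U ->
  \rsum_(s : {ffun 'I_n -> bool}) E (flip s y) <=
  Rpower 2 (p - 1) * (Rpower (INR r) p * A + B).
Proof.
case/(U_S_decomp r_odd) => eps ->.
have flip_le s : E (flip s (\sum_(j < r) sgnvec m (eps j) + sgnvecS m S [ffun=> true])%ring) <=
    Rpower 2 (p - 1) * (Rpower (INR r) (p - 1) *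
      \big[Rplus/0]_(j < r) E (sgnvec m (agree s (eps j)))
      + E (sgnvecS m S (agree s [ffun=> true]))).
  rewrite flipD flip_sum flip_sgnvecS.
  under eq_bigr do rewrite flip_sgnvec.
  apply: Rle_trans (energy_add_le f p_ge1 _ _) _.
  apply: Rmult_le_compat_l; first by left; apply: exp_pos.
  apply: Rplus_le_compat_r.
  exact: (energy_sum_le f p_ge1 r (fun j => sgnvec m (agree s (eps j)))).
apply: Rle_trans (Rsum_le (index_enum _) (fun s _ => flip_le s)) _.
rewrite -Rsum_distrr big_split /= -Rsum_distrr exchange_big /=.
under eq_bigr do rewrite (Rsum_agree (fun e => E (sgnvec m e))).
rewrite (Rsum_agree (fun e => E (sgnvecS m S e))) Rsum_const card_ord -Rmult_assoc.
have r_gt0 : 0 < INR r by apply/lt_0_INR/ltP/odd_gt0.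
have -> : Rpower (INR r) (p - 1) * INR r = Rpower (INR r) p.
  by rewrite -[X in _ * X = _](Rpower_1 _ r_gt0) -Rpower_plus; congr Rpower; lra.
exact: Rle_refl.
Qed.

(* Average over the [2^n] sign flips, which permute [U_S]. *)
Lemma energy_U_S_avg_le :
  / INR #|U| * \big[Rplus/0]_(y in U) E y <=
  Rpower 2 (p - 1) * (Rpower (INR r) p / pow 2 n * A + / pow 2 n * B).
Proof.
have U_gt0 : 0 < INR #|U| by apply/lt_0_INR/ltP/(card_U_S_gt0 m S r_odd).
have pow_gt0 : 0 < pow 2 n by apply: pow_lt; lra.
set K := Rpower 2 (p - 1) * (Rpower (INR r) p * A + B).
have sym : pow 2 n * \big[Rplus/0]_(y in U) E y =
    \big[Rplus/0]_(y in U) (\rsum_(s : {ffun 'I_n -> bool}) E (flip s y)).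
  rewrite -INR_card_signs -Rsum_const [RHS]exchange_big /=.
  by apply: eq_bigr => s _; rewrite (Rsum_U_S_flip S r_odd s E).
have bound : \big[Rplus/0]_(y in U) (\rsum_(s : {ffun 'I_n -> bool}) E (flip s y)) <=
    INR #|U| * K.
  by rewrite -Rsum_const; apply: Rsum_le => y; apply: energy_flip_sum_le.
have -> : Rpower 2 (p - 1) * (Rpower (INR r) p / pow 2 n * A + / pow 2 n * B) =
    / INR #|U| * (/ pow 2 n * (INR #|U| * K)) by rewrite /K; field; lra.
apply: Rmult_le_compat_l; first exact/Rlt_le/Rinv_0_lt_compat.
have -> : \big[Rplus/0]_(y in U) E y = / pow 2 n * (pow 2 n * \big[Rplus/0]_(y in U) E y).
  by field; lra.
apply: Rmult_le_compat_l; first exact/Rlt_le/Rinv_0_lt_compat.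
by rewrite sym.
Qed.

End Smoothing.

Theorem mainTheorem8 :
  exists c : R, (0 < c)%R /\
  forall (m n r : nat), odd r -> (1 <= r)%N -> (r <= 2 * m - 1)%N ->
  forall (X : Banach) (p : R), (1 <= p)%R ->
  forall (f : vec m n -> X) (S : {set 'I_n}),
    ((\rsum_(x : vec m n) powp (vnorm (vsub (f x) (D_S r S f x))) p)
     <= Rpower c p *
        ((Rpower (INR r) p / pow 2 n) *
           (\rsum_(e : {ffun 'I_n -> bool}) (\rsum_(x : vec m n)
              powp (vnorm (vsub (f (vplus x (sgnvec m e))) (f x))) p))
         + (/ pow 2 n) *
           (\rsum_(e : {ffun 'I_n -> bool}) (\rsum_(x : vec m n)
              powp (vnorm (vsub (f (vplus x (sgnvecS m S e))) (f x))) p))))%R.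
Proof.
exists 2; split; first lra.
(* The bound holds for every odd [r]; [r <= 2m - 1] only makes [U_S] faithful. *)
move=> m n r r_odd _ _ X p p_ge1 f S.
have energyE z : \rsum_(x : vec m n) powp (vnorm (vsub (f (vplus x z)) (f x))) p =
    energy f p z by apply: eq_bigr => x _; rewrite vplusE.
rewrite (eq_bigr _ (fun e _ => energyE (sgnvec m e))).
rewrite (eq_bigr _ (fun e _ => energyE (sgnvecS m S e))).
apply: Rle_trans (D_S_dist_le S f r_odd p_ge1) _.
apply: Rle_trans (energy_U_S_avg_le S f r_odd p_ge1) _.
apply: Rmult_le_compat_r; last by apply: Rle_Rpower; lra.
have pow_gt0 : 0 < pow 2 n by apply: pow_lt; lra.
have energy_sum_ge0 (F : {ffun 'I_n -> bool} -> vec m n) :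
    0 <= \rsum_(e : {ffun 'I_n -> bool}) energy f p (F e).
  by apply: Rsum_ge0 => e _; apply: energy_ge0.
apply: Rplus_le_le_0_compat; apply: Rmult_le_pos; try exact: energy_sum_ge0.
  by apply: Rmult_le_pos; [left; apply: exp_pos | apply/Rlt_le/Rinv_0_lt_compat].
exact/Rlt_le/Rinv_0_lt_compat.
Qed.
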